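(* Let $(\mathfrak g,\mu,P)$ be a Nijenhuis Lie algebra and $(M,P_M)$ a Nijenhuis representation over it, and let $\iota:\mathrm C^\bullet_{\mathrm{NjL}}(\mathfrak g,M)\hookrightarrow\mathrm C^\bullet_{\mathrm{NjL}}(\mathfrak g\ltimes M)$ be the embedding described below. Then the image $\mathrm{Im}(\iota)$ is a subcomplex of $(\mathrm C^\bullet_{\mathrm{NjL}}(\mathfrak g\ltimes M),\delta_{\mathrm{NjL}})$.
   Context: All vector spaces are over a field $\mathbf k$ of characteristic $0$. A Nijenhuis Lie algebra is a Lie algebra $(\mathfrak g,\mu=[-,-]_\mu)$ with linear $P$ satisfying $[Pa,Pb]_\mu=P([Pa,b]_\mu+[a,Pb]_\mu-P[a,b]_\mu)$; a Nijenhuis representation is a representation $M$ of $(\mathfrak g,\mu)$ with linear $P_M$ such that $P(a)P_M(x)=P_M(P(a)x+aP_M(x)-P_M(ax))$. The semidirect product $\mathfrak g\ltimes M$ is $\mathfrak g\oplus M$ with bracket $[(a,x),(b,y)]=([a,b]_\mu,ay-bx)$; with the operator $P\oplus P_M$ it is a Nijenhuis Lie algebra (and hence a Nijenhuis representation over itself via the adjoint action). For a Nijenhuis Lie algebra $\mathfrak h$ with Nijenhuis representation $N$ define: $\mathrm C^n_{\mathrm{Lie}}(\mathfrak h,N)=\mathrm{Hom}(\wedge^n\mathfrak h,N)$ with Chevalley–Eilenberg differential $\delta_{\mathrm{Lie},N}(f)(a_1,\dots,a_{n+1})=\sum_i(-1)^{i-1}a_if(\dots,\widehat{a_i},\dots)+\sum_{i<j}(-1)^{i+j}f([a_i,a_j],\dots,\widehat{a_i},\dots,\widehat{a_j},\dots)$;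 $\mathrm C^n_{\mathrm{NjO}}(\mathfrak h,N)=\mathrm{Hom}(\wedge^n\mathfrak h,N)$ with $\delta_{\mathrm{NjO},N}(f)=-P_N\circ\delta_{\mathrm{Lie},N}(f)+\partial(f)$, where $\partial(f)(a_1,\dots,a_{n+1})=\sum_i(-1)^{i-1}P(a_i)f(\dots,\widehat{a_i},\dots)+\sum_{i<j}(-1)^{i+j}f([a_i,a_j]_P,\dots,\widehat{a_i},\dots,\widehat{a_j},\dots)$ and $[a,b]_P=[Pa,b]+[a,Pb]-P[a,b]$; $\Psi_N:\mathrm C^\bullet_{\mathrm{Lie}}\to\mathrm C^\bullet_{\mathrm{NjO}}$ is $\mathrm{Id}_N$ in degree $0$ and $\Psi_N(f)(a_1,\dots,a_n)=\sum_{k=0}^n\sum_{i_1<\dots<i_k}(-1)^{n-k}P_N^{n-k}f(a_1,\dots,Pa_{i_1},\dots,Pa_{i_k},\dots,a_n)$. The complex $\mathrm C^\bullet_{\mathrm{NjL}}(\mathfrak h,N)$ has $\mathrm C^0_{\mathrm{NjL}}=\mathrm C^0_{\mathrm{Lie}}(\mathfrak h,N)$, $\mathrm C^n_{\mathrm{NjL}}=\mathrm C^n_{\mathrm{Lie}}(\mathfrak h,N)\oplus\mathrm C^{n-1}_{\mathrm{NjO}}(\mathfrak h,N)$ for $n\ge1$, and $\delta_{\mathrm{NjL},N}(f,g)=(\delta_{\mathrm{Lie},N}(f),-\Psi_N(f)-\delta_{\mathrm{NjO},N}(g))$. $\mathrm C^\bullet_{\mathrm{NjL}}(\mathfrak g\ltimes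 M)$ with differential $\delta_{\mathrm{NjL}}$ denotes this complex for $\mathfrak h=N=\mathfrak g\ltimes M$ (adjoint). The embedding $\iota$ sends a map $f:\wedge^n\mathfrak g\to M$ to $\bar f:\wedge^n(\mathfrak g\oplus M)\to\mathfrak g\oplus M$, $\bar f((a_1,x_1),\dots,(a_n,x_n))=(0,f(a_1,\dots,a_n))$ (for $n=0$, $m\in M\mapsto(0,m)$), and $\iota(f,g)=(\bar f,\bar g)$. *)

From HB Require Import structures.
From mathcomp Require Import all_boot all_algebra.
Set Implicit Arguments. Unset Strict Implicit. Unset Printing Implicit Defensive.
Import GRing.Theory.
Local Open Scope ring_scope.

Section Generic.
Variables (k : fieldType).

Definition is_linear (V W : lmodType k) (f : V -> W) :=
  forall (c : k) (x y : V), f (c *: x + y) = c *: f x + f y.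

Definition is_bilinear (U V W : lmodType k) (b : U -> V -> W) :=
  (forall y, is_linear (fun x => b x y)) /\ (forall x, is_linear (b x)).

Definition is_Lie (G : lmodType k) (br : G -> G -> G) :=
  [/\ is_bilinear br, (forall a, br a a = 0) &
      (forall a b c, br a (br b c) + br b (br c a) + br c (br a b) = 0)].

Definition is_rep (G M : lmodType k) (br : G -> G -> G) (act : G -> M -> M) :=
  is_bilinear act /\
  (forall a b x, act (br a b) x = act a (act b x) - act b (act a x)).

Definition brP (G : lmodType k) (br : G -> G -> G) (P : G -> G) a b :=
  br (P a) b + br a (P b) - P (br a b).

Definition is_Nijenhuis (G : lmodType k) (br : G -> G -> G) (P : G -> G) :=
  is_linear P /\ forall a b, br (P a) (P b) = P (brP br P a b).

Definition is_Nijenhuis_rep (G M : lmodType k) (act : G -> M -> M)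
    (P : G -> G) (PM : M -> M) :=
  is_linear PM /\
  forall a x, act (P a) (PM x) = PM (act (P a) x + act a (PM x) - PM (act a x)).

(** Cochains: maps Hom(wedge^n H, N), represented as multilinear alternating
    maps on n-families of arguments indexed by 'I_n. *)
Definition cochain (H N : lmodType k) (n : nat) := ('I_n -> H) -> N.

Definition upd (H : lmodType k) n (a : 'I_n -> H) (i : 'I_n) (v : H) : 'I_n -> H :=
  fun j => if j == i then v else a j.

Definition is_cochain (H N : lmodType k) n (f : cochain H N n) :=
  (forall a i, is_linear (fun v => f (upd a i v))) /\
  (forall a (i j : 'I_n), i != j -> a i = a j -> f a = 0).

(* arguments from a list (default 0 beyond its length) *)
Definition args (H : lmodType k) n (s : seq H) : 'I_n -> H := fun i => nth 0 s i.

Variables (H N : lmodType k).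

(** Chevalley-Eilenberg differential (0-indexed signs). *)
Definition dLie (br : H -> H -> H) (act : H -> N -> N) n (f : cochain H N n)
  : cochain H N n.+1 := fun a =>
  \sum_(i < n.+1) (-1) ^+ i *:
      act (a i) (f (args (n:=n) [seq a l | l <- enum 'I_n.+1 & l != i]))
  + \sum_(i < n.+1) \sum_(j < n.+1 | (i < j)%N) (-1) ^+ (i + j) *:
      f (args (n:=n) (br (a i) (a j) ::
                 [seq a l | l <- enum 'I_n.+1 & (l != i) && (l != j)])).

Definition dpartial (br : H -> H -> H) (P : H -> H) (act : H -> N -> N) n
  (f : cochain H N n) : cochain H N n.+1 :=
  dLie (brP br P) (fun a x => act (P a) x) f.

Definition dNjO (br : H -> H -> H) (P : H -> H) (act : H -> N -> N)
  (PN : N -> N) n (f : cochain H N n) : cochain H N n.+1 :=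
  fun a => - PN (dLie br act f a) + dpartial br P act f a.

Definition PsiN (P : H -> H) (PN : N -> N) n (f : cochain H N n)
  : cochain H N n := fun a =>
  \sum_(S : {set 'I_n}) (-1) ^+ (n - #|S|) *:
     iter (n - #|S|) PN (f (fun i => if i \in S then P (a i) else a i)).

(** NjL differential.  C^0_NjL = C^0_Lie; C^{m+1}_NjL = C^{m+1}_Lie (+) C^m_NjO. *)
Definition dNjL0 (br : H -> H -> H) (P : H -> H) (act : H -> N -> N)
  (PN : N -> N) (f : cochain H N 0) : cochain H N 1 * cochain H N 0 :=
  (dLie br act f, fun a => - PsiN P PN f a).

Definition dNjLS (br : H -> H -> H) (P : H -> H) (act : H -> N -> N)
  (PN : N -> N) m (fg : cochain H N m.+1 * cochain H N m)
  : cochain H N m.+2 * cochain H N m.+1 :=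
  (dLie br act fg.1, fun a => - PsiN P PN fg.1 a - dNjO br P act PN fg.2 a).

End Generic.

(** Semidirect product g |x M on G * M, with operator P (+) P_M. *)
Section Semidirect.
Variables (k : fieldType) (G M : lmodType k).
Variables (br : G -> G -> G) (act : G -> M -> M) (P : G -> G) (PM : M -> M).

Definition sd_br (u v : G * M) : G * M :=
  (br u.1 v.1, act u.1 v.2 - act v.1 u.2).
Definition sd_P (u : G * M) : G * M := (P u.1, PM u.2).

Definition iota_c n (f : cochain G M n) : cochain (G * M)%type (G * M)%type n :=
  fun a => (0, f (fun i => (a i).1)).
End Semidirect.

(* The embedding [iota_c] only looks at the g-components of its arguments and
   takes values in M.  In g ⋉ M the g-component of a bracket is the bracket of
   the g-components, (a, x) acts on (0, y) by (0, a y), and P ⊕ P_M maps (0, y)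
   to (0, P_M y).  Hence every term of δ_Lie, ∂ and Ψ evaluated on images of
   iota is again such an image, and δ_NjL (ι f, ι g) = ι (δ_NjL (f, g)) with the
   right-hand differential computed in C_NjL(g, M).  It remains to see that the
   components of δ_NjL (f, g) are again alternating multilinear maps.  For δ_Lie
   (and for ∂, which is δ_Lie for the bracket [-,-]_P and the action a ↦ P(a)·)
   it suffices to test two equal adjacent arguments x, x+1, where the terms
   cancel in pairs.  For Ψ, transposing two equal arguments permutes the subsets
   S and flips the sign of each term, so the sum vanishes in characteristic 0. *)

From HB Require Import structures.
From mathcomp Require Import all_boot all_algebra all_fingroup zify.
From Stdlib Require Import FunctionalExtensionality.
Set Implicit Arguments. Unset Strict Implicit. Unset Printing Implicit Defensive.
Import GRing.Theory.
Local Open Scope ring_scope.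

Section Linear.
Variable k : fieldType.

Section LinearMap.
Variables (V W : lmodType k) (f : V -> W) (hf : is_linear f).

(* [is_linear f] is MathComp's [linear f], so [f] packs into a [{linear V -> W}]. *)
Definition linmap : {linear V -> W} := HB.pack f (GRing.isLinear.Build k V W *:%R f hf).

Lemma is_linear0 : f 0 = 0. Proof. exact: linear0 linmap. Qed.
Lemma is_linearD x y : f (x + y) = f x + f y. Proof. exact: linearD linmap x y. Qed.
Lemma is_linearN x : f (- x) = - f x. Proof. exact: linearN linmap x. Qed.

End LinearMap.

Lemma add_is_linear (V W : lmodType k) (f g : V -> W) :
  is_linear f -> is_linear g -> is_linear (fun v => f v + g v).
Proof. by move=> hf hg c x y; rewrite hf hg scalerDr addrACA. Qed.

Lemma opp_is_linear (V W : lmodType k) (f : V -> W) :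
  is_linear f -> is_linear (fun v => - f v).
Proof. by move=> hf c x y; rewrite hf opprD scalerN. Qed.

Lemma scale_is_linear (V W : lmodType k) (f : V -> W) (d : k) :
  is_linear f -> is_linear (fun v => d *: f v).
Proof. by move=> hf c x y; rewrite hf scalerDr !scalerA mulrC. Qed.

Lemma comp_is_linear (U V W : lmodType k) (f : V -> W) (g : U -> V) :
  is_linear f -> is_linear g -> is_linear (fun v => f (g v)).
Proof. by move=> hf hg c x y; rewrite hg hf. Qed.

Lemma sum_is_linear (V W : lmodType k) (I : Type) (r : seq I) (P : pred I)
    (F : I -> V -> W) :
  (forall i, P i -> is_linear (F i)) ->
  is_linear (fun v => \sum_(i <- r | P i) F i v).
Proof.
move=> hF c x y; rewrite scaler_sumr -big_split /=.
by apply: eq_bigr => i Pi; rewrite hF.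
Qed.

Lemma iter_is_linear (V : lmodType k) (f : V -> V) n :
  is_linear f -> is_linear (iter n f).
Proof. by move=> hf; elim: n => [|n IHn] c x y //=; rewrite IHn hf. Qed.

Lemma bilinear_antisym (U W : lmodType k) (b : U -> U -> W) :
  is_bilinear b -> (forall z, b z z = 0) -> forall x y, b x y = - b y x.
Proof.
move=> [lin1 lin2] b0 x y; apply/eqP; rewrite -addr_eq0.
have := b0 (x + y).
by rewrite (is_linearD (lin1 _)) !(is_linearD (lin2 _)) !b0 add0r addr0 addrC => ->.
Qed.

End Linear.

Lemma adjacent_ord_neq n (x y : 'I_n) : y = x.+1 :> nat -> x != y.
Proof. by move=> yS; apply/eqP => /(congr1 val) /=; lia. Qed.

Lemma enum_ord_adjacent n (x y : 'I_n) : y = x.+1 :> nat ->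
  exists s1 s2, enum 'I_n = s1 ++ x :: y :: s2.
Proof.
move=> yS; exists (take x (enum 'I_n)), (drop y.+1 (enum 'I_n)).
have lt_y : (y < size (enum 'I_n))%N by rewrite size_enum_ord.
have lt_x : (x < size (enum 'I_n))%N by rewrite size_enum_ord ltn_ord.
rewrite -{1}(cat_take_drop x (enum 'I_n)) (drop_nth x lt_x) nth_ord_enum.
by rewrite -yS (drop_nth x lt_y) nth_ord_enum.
Qed.

Lemma map_filter_adjacent (T : Type) n (a : 'I_n -> T) (x y : 'I_n)
    (P1 P2 : pred 'I_n) :
  y = x.+1 :> nat -> a x = a y ->
  P1 x = false -> P1 y = true -> P2 x = true -> P2 y = false ->
  (forall l, l != x -> l != y -> P1 l = P2 l) ->
  [seq a l | l <- enum 'I_n & P1 l] = [seq a l | l <- enum 'I_n & P2 l].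
Proof.
move=> yS axy p1x p1y p2x p2y P12.
have [s1 [s2 E]] := enum_ord_adjacent yS.
have := enum_uniq 'I_n; rewrite E cat_uniq /= => /and5P [_ s1xy xs2 ys2 _].
move: s1xy; rewrite !negb_or => /and3P [xs1 ys1 _].
move: xs2; rewrite in_cons negb_or => /andP [_ xs2].
have eq_filter_off s : x \notin s -> y \notin s -> filter P1 s = filter P2 s.
  move=> xs ys; apply: eq_in_filter => l ls; apply: P12.
    by apply: contraNneq xs => <-.
  by apply: contraNneq ys => <-.
by rewrite !filter_cat /= p1x p1y p2x p2y !map_cat /= axy !eq_filter_off.
Qed.

Lemma mem_filter_enum n (P : pred 'I_n) x : (x \in [seq l <- enum 'I_n | P l]) = P x.
Proof. by rewrite mem_filter mem_enum andbT. Qed.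

Lemma size_filter_neq n (p : 'I_n) : size [seq l <- enum 'I_n | l != p] = n.-1.
Proof.
rewrite (@eq_filter _ _ (predC1 p)) // -rem_filter ?enum_uniq //.
by rewrite size_rem ?mem_enum // size_enum_ord.
Qed.

Lemma size_filter_neq2 n (p q : 'I_n) : p != q ->
  size [seq l <- enum 'I_n | (l != p) && (l != q)] = n.-2.
Proof.
move=> pq; rewrite (@eq_filter _ _ [predI predC1 q & predC1 p]); last first.
  by move=> l /=; rewrite andbC.
rewrite filter_predI -!rem_filter ?rem_uniq ?enum_uniq //.
rewrite size_rem; last by rewrite mem_rem_uniq ?enum_uniq // !inE mem_enum eq_sym pq.
by rewrite size_rem ?mem_enum // size_enum_ord.
Qed.

Lemma sum_pair_cancel (V : nmodType) n (F : 'I_n -> V) x y :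
  x != y -> F x + F y = 0 -> (forall p, p != x -> p != y -> F p = 0) ->
  \sum_p F p = 0.
Proof.
move=> xy Fxy F0; rewrite (bigD1 x) //= (bigD1 y) 1?eq_sym //=.
by rewrite big1 ?addr0 // => p /andP [px py]; apply: F0.
Qed.

Section Cochains.
Variables (k : fieldType) (H N : lmodType k).

Definition multilinear n (f : cochain H N n) :=
  forall a i, is_linear (fun v => f (upd a i v)).

Lemma cochain_multilinear n (f : cochain H N n) : is_cochain f -> multilinear f.
Proof. by case. Qed.

Lemma upd_eq n (a : 'I_n -> H) i v : upd a i v i = v.
Proof. by rewrite /upd eqxx. Qed.

Lemma upd_neq n (a : 'I_n -> H) i v p : p != i -> upd a i v p = a p.
Proof. by rewrite /upd => /negbTE ->. Qed.

Lemma multilinear_tperm n (f : cochain H N n) (p q : 'I_n) :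
  multilinear f -> p != q -> (forall a, a p = a q -> f a = 0) ->
  forall a, f (a \o tperm p q) = - f a.
Proof.
move=> hl pq hz a; pose b x y := f (upd (upd a p x) q y).
have updC x y : upd (upd a p x) q y = upd (upd a q y) p x.
  apply: functional_extensionality => l; rewrite /upd.
  by case: (eqVneq l q) => [->|//]; rewrite eq_sym (negbTE pq).
have b_bilinear : is_bilinear b.
  by split=> [y|x] c u v; rewrite /b; [rewrite !updC|]; apply: hl.
have b_alt z : b z z = 0.
  by apply: hz; rewrite upd_eq upd_neq // upd_eq.
have -> : a \o tperm p q = upd (upd a p (a q)) q (a p).
  apply: functional_extensionality => l /=; rewrite /upd.
  by case: tpermP => [->|->|/eqP/negbTE lp /eqP/negbTE lq];
    rewrite ?eqxx ?lp ?lq ?(negbTE pq).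
have Ea : a = upd (upd a p (a p)) q (a q).
  apply: functional_extensionality => l; rewrite /upd.
  by case: (eqVneq l q) => [->//|_]; case: (eqVneq l p) => [->|].
rewrite [in RHS]Ea; exact: (bilinear_antisym b_bilinear b_alt (a q) (a p)).
Qed.

Lemma is_cochain_adjacent n (f : cochain H N n) :
  multilinear f ->
  (forall a (i j : 'I_n), j = i.+1 :> nat -> a i = a j -> f a = 0) ->
  is_cochain f.
Proof.
move=> hl hadj.
(* Induction on the gap: an adjacent transposition moves [a j] one step
   towards [a i] and only changes the sign. *)
have far d a (i j : 'I_n) : j = (i + d).+1 :> nat -> a i = a j -> f a = 0.
  elim: d a j => [|d IHd] a j hj aij; first by apply: (hadj a i j) => //; rewrite hj addn0.
  have lt_j' : ((i + d).+1 < n)%N by have := ltn_ord j; lia.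
  pose j' := Ordinal lt_j'.
  have jS : j = j'.+1 :> nat by rewrite hj addnS.
  have j'j := adjacent_ord_neq jS.
  have := multilinear_tperm hl j'j (fun b => hadj b j' j jS) a.
  have ij' : i != j' by apply/eqP => /(congr1 val) /=; lia.
  have ij : i != j by apply/eqP => /(congr1 val) /=; lia.
  rewrite (IHd _ j') //=; last by rewrite tpermL tpermD // eq_sym.
  by move/eqP; rewrite eq_sym oppr_eq0 => /eqP.
split=> // a i j ij aij.
case: (ltngtP i j) => [lt|lt|/val_inj eq]; last by rewrite eq eqxx in ij.
- by apply: (far (j - i.+1)%N a i j) => //; lia.
- by apply: (far (i - j.+1)%N a j i) => //; lia.
Qed.

Lemma is_cochain_add n (f g : cochain H N n) :
  is_cochain f -> is_cochain g -> is_cochain (fun a => f a + g a).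
Proof.
move=> [lf af] [lg ag]; split=> [a i|a i j ij aij]; first exact: add_is_linear.
by rewrite (af a i j) // (ag a i j) // addr0.
Qed.

Lemma is_cochain_opp n (f : cochain H N n) :
  is_cochain f -> is_cochain (fun a => - f a).
Proof.
move=> [lf af]; split=> [a i|a i j ij aij]; first exact: opp_is_linear.
by rewrite (af a i j) // oppr0.
Qed.

Lemma is_cochain_comp n (f : cochain H N n) (h : N -> N) :
  is_linear h -> is_cochain f -> is_cochain (fun a => h (f a)).
Proof.
move=> hh [lf af]; split=> [a i|a i j ij aij]; first exact: comp_is_linear.
by rewrite (af a i j) // is_linear0.
Qed.

Lemma map_upd_notin m (s : seq 'I_m) (a : 'I_m -> H) i v :
  i \notin s -> map (upd a i v) s = map a s.
Proof.
by move=> si; apply/eq_in_map => l ls; rewrite upd_neq //; apply: contraNneq si => <-.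
Qed.

Lemma args_cat_upd n (L1 L2 : seq H) v w (lt_L1 : (size L1 < n)%N) :
  args (n:=n) (L1 ++ v :: L2) = upd (args (n:=n) (L1 ++ w :: L2)) (Ordinal lt_L1) v.
Proof.
apply: functional_extensionality => l; rewrite /args /upd !nth_cat.
case: (ltnP l (size L1)) => hl.
  by have -> : (l == Ordinal lt_L1) = false by apply/eqP => /(congr1 val) /=; lia.
case: (eqVneq l (Ordinal lt_L1)) => [->|ne] /=; first by rewrite subnn.
have : (l - size L1 != 0)%N by apply: contra_neq ne => e; apply: val_inj => /=; lia.
by case: (l - size L1)%N.
Qed.

Lemma args_map_upd n m (pre : seq H) (s : seq 'I_m) (a : 'I_m -> H) i :
  uniq s -> i \in s -> (size pre + size s = n)%N ->
  exists i' : 'I_n, forall v,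
    args (n:=n) (pre ++ map (upd a i v) s) = upd (args (n:=n) (pre ++ map a s)) i' v.
Proof.
move=> us si; case/splitPr: si us => s1 s2; rewrite cat_uniq /= => us hsz.
case/and4P: us => _ /norP [s1i _] s2i _.
have lt_pre : (size (pre ++ map a s1) < n)%N.
  by rewrite size_cat size_map; rewrite size_cat /= in hsz; lia.
exists (Ordinal lt_pre) => v.
rewrite !map_cat /= !map_upd_notin // upd_eq !catA.
exact: args_cat_upd.
Qed.

Lemma cochain_args_eq0 n m (f : cochain H N n) (pre : seq H) (s : seq 'I_m)
    (a : 'I_m -> H) (x y : 'I_m) :
  is_cochain f -> uniq s -> x \in s -> y \in s -> x != y -> a x = a y ->
  (size pre + size s = n)%N -> f (args (n:=n) (pre ++ map a s)) = 0.
Proof.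
move=> [_ alt] us xs ys xy axy hsz.
have hx : (size pre + index x s < n)%N by rewrite -hsz ltn_add2l index_mem.
have hy : (size pre + index y s < n)%N by rewrite -hsz ltn_add2l index_mem.
apply: (alt _ (Ordinal hx) (Ordinal hy)).
  apply/eqP => /(congr1 val) /= /addnI e.
  by move/eqP: xy; apply; rewrite -(nth_index x xs) e nth_index.
rewrite /args /= !nth_cat !ltnNge !leq_addr /= !addKn.
by rewrite !(nth_map x) ?index_mem // !nth_index.
Qed.

Lemma cochain_head_linear n (f : cochain H N n) (L : seq H) :
  is_cochain f -> (size L).+1 = n -> is_linear (fun w => f (args (n:=n) (w :: L))).
Proof.
move=> hf hs; have lt0 : (size (@nil H) < n)%N by rewrite -hs.
have E w : args (n:=n) (w :: L) = upd (args (n:=n) (0 :: L)) (Ordinal lt0) w.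
  exact: (args_cat_upd (L1 := [::])).
by move=> c x y; rewrite (E (c *: x + y)) (E x) (E y); apply: cochain_multilinear.
Qed.

Lemma cochain_head0 n (f : cochain H N n) (L : seq H) :
  is_cochain f -> (size L).+1 = n -> f (args (n:=n) (0 :: L)) = 0.
Proof. by move=> hf hs; apply: is_linear0 (cochain_head_linear hf hs). Qed.

End Cochains.

Section ChevalleyEilenberg.
Variables (k : fieldType) (H N : lmodType k).
Variables (br : H -> H -> H) (act : H -> N -> N) (n : nat) (f : cochain H N n).
Hypotheses (br_bilinear : is_bilinear br) (br_alt : forall z, br z z = 0).
Hypotheses (act_bilinear : is_bilinear act) (f_cochain : is_cochain f).

Definition ce_act_part : cochain H N n.+1 := fun a =>
  \sum_(i < n.+1) (-1) ^+ i *: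
      act (a i) (f (args (n:=n) [seq a l | l <- enum 'I_n.+1 & l != i])).

Definition ce_bracket_term (a : 'I_n.+1 -> H) (i j : 'I_n.+1) : N :=
  (-1) ^+ (i + j) *:
      f (args (n:=n) (br (a i) (a j) ::
                      [seq a l | l <- enum 'I_n.+1 & (l != i) && (l != j)])).

Definition ce_bracket_part : cochain H N n.+1 := fun a =>
  \sum_(i < n.+1) \sum_(j < n.+1 | (i < j)%N) ce_bracket_term a i j.

Lemma dLieE : dLie br act f = fun a => ce_act_part a + ce_bracket_part a.
Proof. by []. Qed.

Let uniq_filter_enum (P : pred 'I_n.+1) : uniq [seq l <- enum 'I_n.+1 | P l].
Proof. exact: filter_uniq (enum_uniq _). Qed.

Lemma ce_act_part_multilinear : multilinear ce_act_part.
Proof.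
move=> a i; apply: sum_is_linear => p _; apply: scale_is_linear.
case: (eqVneq p i) => [->|pi].
  have ni : i \notin [seq l <- enum 'I_n.+1 | l != i] by rewrite mem_filter_enum eqxx.
  by move=> c v w; rewrite !upd_eq !(map_upd_notin _ _ ni); apply: act_bilinear.1.
have ip : i \in [seq l <- enum 'I_n.+1 | l != p] by rewrite mem_filter_enum eq_sym pi.
have [i' E] := args_map_upd (n := n) (pre := [::]) a (uniq_filter_enum _) ip (size_filter_neq p).
move=> c v w; rewrite !(upd_neq _ _ pi) !E.
exact: (comp_is_linear (act_bilinear.2 (a p)) (cochain_multilinear f_cochain _ _)).
Qed.

Lemma ce_bracket_part_multilinear : multilinear ce_bracket_part.
Proof.
move=> a i; apply: sum_is_linear => p _; apply: sum_is_linear => q lt_pq.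
apply: scale_is_linear.
have pq : p != q by rewrite neq_ltn lt_pq.
have qp : q != p by rewrite eq_sym.
have sz : (size [seq a l | l <- enum 'I_n.+1 & (l != p) && (l != q)]).+1 = n.
  by rewrite size_map size_filter_neq2 //; have := ltn_ord q; lia.
case: (eqVneq p i) => [?|pi]; first subst i.
  have np : p \notin [seq l <- enum 'I_n.+1 | (l != p) && (l != q)].
    by rewrite mem_filter_enum eqxx.
  move=> c v w; rewrite !upd_eq !(upd_neq _ _ qp) !(map_upd_notin _ _ np).
  exact: (comp_is_linear (cochain_head_linear f_cochain sz) (br_bilinear.1 (a q))).
case: (eqVneq q i) => [?|qi]; first subst i.
  have nq : q \notin [seq l <- enum 'I_n.+1 | (l != p) && (l != q)].
    by rewrite mem_filter_enum eqxx andbF.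
  move=> c v w; rewrite !upd_eq !(upd_neq _ _ pq) !(map_upd_notin _ _ nq).
  exact: (comp_is_linear (cochain_head_linear f_cochain sz) (br_bilinear.2 (a p))).
have ipq : i \in [seq l <- enum 'I_n.+1 | (l != p) && (l != q)].
  by rewrite mem_filter_enum !(eq_sym i) pi qi.
have sz' : (size [:: br (a p) (a q)] +
             size [seq l <- enum 'I_n.+1 | (l != p) && (l != q)] = n)%N.
  by rewrite -[RHS]sz size_map.
have [i' E] := args_map_upd (pre := [:: br (a p) (a q)]) a (uniq_filter_enum _) ipq sz'.
move=> c v w; rewrite !(upd_neq _ _ pi) !(upd_neq _ _ qi) !E.
exact: cochain_multilinear.
Qed.

Lemma ce_act_part_adjacent a (x y : 'I_n.+1) :
  y = x.+1 :> nat -> a x = a y -> ce_act_part a = 0.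
Proof.
move=> yS axy; have xy := adjacent_ord_neq yS.
apply: (sum_pair_cancel xy) => [|p px py].
  rewrite (@map_filter_adjacent _ _ a x y (fun l => l != x) (fun l => l != y)) //=;
    try by [rewrite eqxx | rewrite eq_sym xy | rewrite xy | move=> l -> ->].
  by rewrite -axy yS exprS mulN1r scaleNr addrN.
have [xp yp] : x \in [seq l <- enum 'I_n.+1 | l != p] /\
               y \in [seq l <- enum 'I_n.+1 | l != p].
  by rewrite !mem_filter_enum !(eq_sym _ p) px py.
rewrite (cochain_args_eq0 (pre := [::]) f_cochain (uniq_filter_enum _) xp yp xy axy).
  by rewrite is_linear0 ?scaler0 //; apply: act_bilinear.2.
by rewrite size_filter_neq.
Qed.

Lemma ce_bracket_term_off a (x y p q : 'I_n.+1) :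
  x != y -> a x = a y -> p != q ->
  p != x -> p != y -> q != x -> q != y -> ce_bracket_term a p q = 0.
Proof.
move=> xy axy pq px py qx qy.
have [xpq ypq] : x \in [seq l <- enum 'I_n.+1 | (l != p) && (l != q)] /\
                 y \in [seq l <- enum 'I_n.+1 | (l != p) && (l != q)].
  by rewrite !mem_filter_enum !(eq_sym _ p) !(eq_sym _ q) px py qx qy.
rewrite /ce_bracket_term (cochain_args_eq0 (pre := [:: _]) f_cochain
  (uniq_filter_enum _) xpq ypq xy axy) ?scaler0 //.
have pq' : (p : nat) != q by apply: contra_neq pq => /val_inj.
by rewrite /= size_filter_neq2 //; have := ltn_ord p; have := ltn_ord q; lia.
Qed.

Lemma ce_bracket_rows_adjacent a (x y : 'I_n.+1) :
  y = x.+1 :> nat -> a x = a y ->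
  \sum_(j < n.+1 | (x < j)%N) ce_bracket_term a x j +
  \sum_(j < n.+1 | (y < j)%N) ce_bracket_term a y j = 0.
Proof.
move=> yS axy; have xy := adjacent_ord_neq yS.
rewrite [X in X + _]big_mkcond [X in _ + X]big_mkcond -big_split /=.
apply: big1 => q _.
case: (eqVneq q x) => [->|qx]; first by rewrite ltnn yS ltnNge leqnSn addr0.
case: (eqVneq q y) => [->|qy].
  rewrite ltnn yS leqnn addr0 /ce_bracket_term -axy br_alt cochain_head0 ?scaler0 //.
  by rewrite size_map size_filter_neq2 //; have := ltn_ord y; lia.
case: (ltnP x q) => [lt_xq|le_qx]; last first.
  have le_qy : (q <= y)%N by rewrite yS leqW.
  by rewrite ltnNge le_qy add0r.
have qy' : (q : nat) != y by apply: contra_neq qy => /val_inj.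
rewrite (_ : (y < q)%N); last by lia.
have [yx xq yq] : [/\ y != x, x != q & y != q] by rewrite !(eq_sym _ q) eq_sym.
rewrite /ce_bracket_term axy.
rewrite (@map_filter_adjacent _ _ a x y (fun l => (l != x) && (l != q))
           (fun l => (l != y) && (l != q))) //=;
  try by [rewrite ?eqxx ?xy ?yx ?xq ?yq | move=> l -> ->].
by rewrite yS addSn exprS mulN1r scaleNr addrN.
Qed.

Lemma ce_bracket_row_off a (x y p : 'I_n.+1) :
  y = x.+1 :> nat -> a x = a y -> p != x -> p != y ->
  \sum_(j < n.+1 | (p < j)%N) ce_bracket_term a p j = 0.
Proof.
move=> yS axy px py; have xy := adjacent_ord_neq yS.
have px' : (p : nat) != x by apply: contra_neq px => /val_inj.
have py' : (p : nat) != y by apply: contra_neq py => /val_inj.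
rewrite big_mkcond; apply: (sum_pair_cancel xy) => [|q qx qy] /=; last first.
  by case: ifP => // lt_pq; rewrite (ce_bracket_term_off _ axy) // neq_ltn lt_pq.
case: (ltnP p x) => [lt_px|le_xp]; last first.
  by rewrite /= (_ : (p < y)%N = false) ?add0r //; lia.
have [yx xp yp] : [/\ y != x, x != p & y != p] by rewrite !(eq_sym _ p) eq_sym.
rewrite (_ : (p < y)%N) /ce_bracket_term -?axy; last by lia.
rewrite (@map_filter_adjacent _ _ a x y (fun l => (l != p) && (l != x))
           (fun l => (l != p) && (l != y))) //=;
  try by [rewrite ?eqxx ?xy ?yx ?xp ?yp ?px ?py ?andbF | move=> l -> ->].
by rewrite yS addnS exprS mulN1r scaleNr addrN.
Qed.

Lemma ce_bracket_part_adjacent a (x y : 'I_n.+1) :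
  y = x.+1 :> nat -> a x = a y -> ce_bracket_part a = 0.
Proof.
move=> yS axy; have xy := adjacent_ord_neq yS.
apply: (sum_pair_cancel xy); first exact: ce_bracket_rows_adjacent.
by move=> p; apply: ce_bracket_row_off.
Qed.

Lemma dLie_cochain : is_cochain (dLie br act f).
Proof.
rewrite dLieE; apply: is_cochain_adjacent => [a i|a x y yS axy].
  exact: add_is_linear (ce_act_part_multilinear a i) (ce_bracket_part_multilinear a i).
by rewrite (ce_act_part_adjacent yS axy) (ce_bracket_part_adjacent yS axy) addr0.
Qed.

End ChevalleyEilenberg.

Section Psi.
Variables (k : fieldType) (H N : lmodType k) (P : H -> H) (PN : N -> N).
Hypotheses (P_linear : is_linear P) (PN_linear : is_linear PN).

Lemma PsiN_multilinear n (f : cochain H N n) :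
  is_cochain f -> multilinear (PsiN P PN f).
Proof.
move=> f_cochain a i; apply: sum_is_linear => S _; apply: scale_is_linear.
apply: comp_is_linear; first exact: iter_is_linear.
pose b l := if l \in S then P (a l) else a l.
have E v : (fun l => if l \in S then P (upd a i v l) else upd a i v l) =
           upd b i (if i \in S then P v else v).
  by apply: functional_extensionality => l; rewrite /upd /b; case: (eqVneq l i) => [->|].
move=> c x y; rewrite !E; case: (i \in S); last exact: cochain_multilinear.
by rewrite P_linear; apply: cochain_multilinear.
Qed.

Hypothesis char0 : [pchar k] =i pred0.

Lemma double_eq0 (x : N) : x + x = 0 -> x = 0.
Proof.
move=> xx0; have two_neq0 : 2%:R != 0 :> k by rewrite ((pcharf0P k).1 char0 2).
have : 2%:R *: x = 0 by rewrite scaler_nat mulr2n xx0.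
by move/eqP; rewrite scaler_eq0 (negbTE two_neq0) => /eqP.
Qed.

Lemma PsiN_alternating n (f : cochain H N n) (a : 'I_n -> H) (i j : 'I_n) :
  is_cochain f -> i != j -> a i = a j -> PsiN P PN f a = 0.
Proof.
move=> f_cochain ij aij.
pose b (S : {set 'I_n}) l := if l \in S then P (a l) else a l.
pose T (S : {set 'I_n}) := (-1) ^+ (n - #|S|) *: iter (n - #|S|) PN (f (b S)).
have a_tperm l : a (tperm i j l) = a l by case: tpermP => [->|->|//]; rewrite aij.
have T_tperm (S : {set 'I_n}) : T (tperm i j @^-1: S) = - T S.
  rewrite /T card_preimset; last exact: perm_inj.
  rewrite -scalerN -is_linearN; last exact: iter_is_linear.
  have -> : b (tperm i j @^-1: S) = b S \o tperm i j.
    by apply: functional_extensionality => l; rewrite /b inE /= a_tperm.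
  rewrite (multilinear_tperm (cochain_multilinear f_cochain) ij) //.
  by case: f_cochain => _ f_alt c; apply: f_alt.
have tpermK_set : involutive (fun S : {set 'I_n} => tperm i j @^-1: S).
  by move=> S; apply/setP => l; rewrite !inE tpermK.
have -> : PsiN P PN f a = \sum_S T S by [].
apply: double_eq0; rewrite {2}(reindex_inj (can_inj tpermK_set)) -big_split /=.
by apply: big1 => S _; rewrite T_tperm addrN.
Qed.

Lemma PsiN_cochain n (f : cochain H N n) : is_cochain f -> is_cochain (PsiN P PN f).
Proof.
move=> f_cochain; split; first exact: PsiN_multilinear.
by move=> a i j; apply: PsiN_alternating.
Qed.

End Psi.

Section NijenhuisDifferential.
Variables (k : fieldType) (H N : lmodType k).
Variables (br : H -> H -> H) (P : H -> H) (act : H -> N -> N) (PN : N -> N).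
Hypotheses (br_bilinear : is_bilinear br) (br_alt : forall z, br z z = 0).
Hypotheses (P_linear : is_linear P) (act_bilinear : is_bilinear act).
Hypotheses (PN_linear : is_linear PN) (char0 : [pchar k] =i pred0).

Lemma brP_bilinear : is_bilinear (brP br P).
Proof.
split=> [y|x]; rewrite /brP; apply: add_is_linear; try apply: add_is_linear;
  try apply: opp_is_linear.
- exact: comp_is_linear (br_bilinear.1 y) P_linear.
- exact: br_bilinear.1.
- exact: comp_is_linear P_linear (br_bilinear.1 y).
- exact: br_bilinear.2.
- exact: comp_is_linear (br_bilinear.2 x) P_linear.
- exact: comp_is_linear P_linear (br_bilinear.2 x).
Qed.

Lemma brP_alt z : brP br P z z = 0.
Proof.
by rewrite /brP br_alt is_linear0 // subr0 (bilinear_antisym br_bilinear br_alt z) addrN.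
Qed.

Lemma act_P_bilinear : is_bilinear (fun a x => act (P a) x).
Proof.
by split=> [x|a]; [exact: comp_is_linear (act_bilinear.1 x) P_linear | exact: act_bilinear.2].
Qed.

Lemma dNjO_cochain n (f : cochain H N n) :
  is_cochain f -> is_cochain (dNjO br P act PN f).
Proof.
move=> f_cochain; apply: is_cochain_add.
  by apply/is_cochain_opp/is_cochain_comp => //; exact: dLie_cochain.
exact: dLie_cochain brP_bilinear brP_alt act_P_bilinear f_cochain.
Qed.

Lemma dNjL0_cochain (f : cochain H N 0) : is_cochain f ->
  is_cochain (dNjL0 br P act PN f).1 /\ is_cochain (dNjL0 br P act PN f).2.
Proof.
move=> f_cochain; split; first exact: dLie_cochain.
exact/is_cochain_opp/PsiN_cochain.
Qed.

Lemma dNjLS_cochain m (f : cochain H N m.+1) (g : cochain H N m) :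
  is_cochain f -> is_cochain g ->
  is_cochain (dNjLS br P act PN (f, g)).1 /\ is_cochain (dNjLS br P act PN (f, g)).2.
Proof.
move=> f_cochain g_cochain; split; first exact: dLie_cochain.
apply: is_cochain_add; first exact/is_cochain_opp/PsiN_cochain.
exact/is_cochain_opp/dNjO_cochain.
Qed.

End NijenhuisDifferential.

Section Semidirect.
Variables (k : fieldType) (G M : lmodType k).
Variables (br : G -> G -> G) (act : G -> M -> M) (P : G -> G) (PM : M -> M).
Hypotheses (br_bilinear : is_bilinear br) (act_bilinear : is_bilinear act).
Hypothesis P_linear : is_linear P.

Lemma args_fst n (L : seq (G * M)) :
  (fun i => (args (n:=n) L i).1) = args (n:=n) (map fst L).
Proof.
apply: functional_extensionality => i; rewrite /args.
case: (ltnP i (size L)) => lt_iL; first by rewrite (nth_map 0).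
by rewrite !nth_default ?size_map.
Qed.

Lemma iota_dLie (BR ACT : G * M -> G * M -> G * M) (brG : G -> G -> G)
    (actG : G -> M -> M) n (f : cochain G M n) :
  (forall u v, (BR u v).1 = brG u.1 v.1) ->
  (forall u y, ACT u (0, y) = (0, actG u.1 y)) ->
  dLie BR ACT (iota_c f) = iota_c (dLie brG actG f).
Proof.
move=> BR1 ACT_M; apply: functional_extensionality => a.
rewrite /dLie /iota_c; apply: injective_projections => /=.
  rewrite !(raddf_sum fst) /= !big1 ?addr0 // => [p _|p _].
    by rewrite (raddf_sum fst) big1 // => q _; rewrite /= scaler0.
  by rewrite /= ACT_M /= scaler0.
rewrite !(raddf_sum snd) /=; congr (_ + _).
  by apply: eq_bigr => p _; rewrite /= ACT_M /= args_fst -map_comp.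
apply: eq_bigr => p _; rewrite (raddf_sum snd); apply: eq_bigr => q _.
by rewrite /= args_fst /= BR1 -map_comp.
Qed.

Lemma iter_sd_P m y : iter m (sd_P P PM) ((0 : G), y) = (0, iter m PM y).
Proof. by elim: m => [|m IHm] //=; rewrite IHm /sd_P /= is_linear0. Qed.

Lemma iota_PsiN n (f : cochain G M n) :
  PsiN (sd_P P PM) (sd_P P PM) (iota_c f) = iota_c (PsiN P PM f).
Proof.
apply: functional_extensionality => a.
rewrite /PsiN /iota_c; apply: injective_projections => /=.
  by rewrite (raddf_sum fst) big1 // => S _; rewrite /= iter_sd_P /= scaler0.
rewrite (raddf_sum snd); apply: eq_bigr => S _; rewrite /= iter_sd_P /=.
by congr (_ *: iter _ _ (f _)); apply: functional_extensionality => i; case: (i \in S).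
Qed.

Lemma sd_br_M u y : sd_br br act u (0, y) = (0, act u.1 y).
Proof.
by rewrite /sd_br /= is_linear0 ?(is_linear0 (act_bilinear.1 _)) ?subr0 //; apply: br_bilinear.2.
Qed.

Notation brGM := (sd_br br act).
Notation PGM := (sd_P P PM).

Lemma iota_dNjL0 (f : cochain G M 0) :
  dNjL0 brGM PGM brGM PGM (iota_c f) =
  (iota_c (dNjL0 br P act PM f).1, iota_c (dNjL0 br P act PM f).2).
Proof.
rewrite /dNjL0 (iota_dLie f (fun _ _ => erefl) sd_br_M) iota_PsiN; congr (_, _).
by apply: functional_extensionality => a; apply: injective_projections; rewrite /= ?oppr0.
Qed.

Lemma iota_dNjLS m (f : cochain G M m.+1) (g : cochain G M m) :
  dNjLS brGM PGM brGM PGM (iota_c f, iota_c g) =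
  (iota_c (dNjLS br P act PM (f, g)).1, iota_c (dNjLS br P act PM (f, g)).2).
Proof.
have sd_brP1 u v : (brP brGM PGM u v).1 = brP br P u.1 v.1 by [].
have sd_actP_M u y : brGM (PGM u) (0, y) = (0, act (P u.1) y) by rewrite sd_br_M.
rewrite /dNjLS /dNjO /dpartial /= (iota_dLie f (fun _ _ => erefl) sd_br_M).
rewrite (iota_dLie g (fun _ _ => erefl) sd_br_M).
rewrite (iota_dLie (ACT := fun u x => brGM (PGM u) x) (actG := fun a x => act (P a) x)
  g sd_brP1 sd_actP_M).
rewrite iota_PsiN; congr (_, _); apply: functional_extensionality => a.
by apply: injective_projections; rewrite /= ?(is_linear0 P_linear) ?oppr0 ?addr0 ?subr0.
Qed.

End Semidirect.

Theorem proposition6p5 (k : fieldType) (char0 : [pchar k] =i pred0)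
  (G M : lmodType k) (br : G -> G -> G) (act : G -> M -> M)
  (P : G -> G) (PM : M -> M) :
  is_Lie br -> is_rep br act -> is_Nijenhuis br P ->
  is_Nijenhuis_rep act P PM ->
  (forall f : cochain G M 0, is_cochain f ->
     exists (f' : cochain G M 1) (g' : cochain G M 0),
       [/\ is_cochain f', is_cochain g',
           iota_c f' = (dNjL0 (sd_br br act) (sd_P P PM) (sd_br br act)
                          (sd_P P PM) (iota_c f)).1 &
           iota_c g' = (dNjL0 (sd_br br act) (sd_P P PM) (sd_br br act)
                          (sd_P P PM) (iota_c f)).2]) /\
  (forall m (f : cochain G M m.+1) (g : cochain G M m),
     is_cochain f -> is_cochain g ->
     exists (f' : cochain G M m.+2) (g' : cochain G M m.+1),
       [/\ is_cochain f', is_cochain g',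
           iota_c f' = (dNjLS (sd_br br act) (sd_P P PM) (sd_br br act)
                          (sd_P P PM) (iota_c f, iota_c g)).1 &
           iota_c g' = (dNjLS (sd_br br act) (sd_P P PM) (sd_br br act)
                          (sd_P P PM) (iota_c f, iota_c g)).2]).
Proof.
move=> [br_bilinear br_alt _] [act_bilinear _] [P_linear _] [PM_linear _].
have cochains := dNjL0_cochain br_bilinear br_alt P_linear act_bilinear PM_linear char0.
have cochainsS := dNjLS_cochain br_bilinear br_alt P_linear act_bilinear PM_linear char0.
split=> [f f_cochain | m f g f_cochain g_cochain].
  have [f'_cochain g'_cochain] := cochains f f_cochain.
  exists (dNjL0 br P act PM f).1, (dNjL0 br P act PM f).2.
  by rewrite (iota_dNjL0 _ br_bilinear act_bilinear P_linear).
have [f'_cochain g'_cochain] := cochainsS _ f g f_cochain g_cochain.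
exists (dNjLS br P act PM (f, g)).1, (dNjLS br P act PM (f, g)).2.
by rewrite (iota_dNjLS _ br_bilinear act_bilinear P_linear).
Qed.
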